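(* Let $p,q,r$ be probability distributions on a finite alphabet $\mathcal{X}$ and let $\mu_q=\min_{x\in\mathcal{X}}q(x)$. Then $$\mathbb{D}(p\|q)\le\log\Big(\frac1{\mu_q}\Big)\sqrt{2\ln2}\Big[\sqrt{\min(\mathbb{D}(p\|r),\mathbb{D}(r\|p))}+\sqrt{\min(\mathbb{D}(q\|r),\mathbb{D}(r\|q))}\Big].$$
   Context: $\log$ is base 2 and $\ln$ is the natural logarithm; $\mathbb{D}(p\|q)=\sum_xp(x)\log\frac{p(x)}{q(x)}$ is the Kullback–Leibler divergence, with the convention $\mathbb{D}(p\|q)=+\infty$ if $p(x)>0=q(x)$ for some $x$ (the inequality being trivial when some quantity is infinite). *)

(* classical reals. Alphabet = {0,...,n-1} with n >= 1. *)
From Stdlib Require Import Reals Lra Lia List.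
Import ListNotations.
Open Scope R_scope.

Definition sumR (n : nat) (f : nat -> R) : R :=
  fold_right Rplus 0 (map f (seq 0 n)).

Definition is_dist (n : nat) (p : nat -> R) : Prop :=
  (forall i, (i < n)%nat -> 0 <= p i) /\ sumR n p = 1.

Definition log2 (x : R) : R := ln x / ln 2.

Definition mu (n : nat) (q : nat -> R) : R :=
  fold_right Rmin (q 0%nat) (map q (seq 0 n)).

(* Extended nonnegative values: None stands for +infinity. *)
Definition ext := option R.

Definition ext_min (x y : ext) : ext :=
  match x, y with
  | Some a, Some b => Some (Rmin a b)
  | Some a, None => Some a
  | None, y => y
  end.

(* KL divergence D(p||q) = sum_x p(x) log(p(x)/q(x)), with 0 log(0/q)=0,
   and +infinity (None) if p(x) > 0 = q(x) for some x. *)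
Definition KL (n : nat) (p q : nat -> R) : ext :=
  if existsb (fun i => if Rlt_dec 0 (p i) then
                         (if Req_EM_T (q i) 0 then true else false)
                       else false) (seq 0 n)
  then None
  else Some (sumR n (fun i => if Rlt_dec 0 (p i)
                              then p i * log2 (p i / q i) else 0)).

From Stdlib Require Import Reals Lra Lia List.
From Coquelicot Require Import Coquelicot.
Open Scope R_scope.

(* Both sides are compared with the l1 distance.  A termwise convexity bound on
   [t ln (t/q)] gives D(p||q) <= log(1/mu_q) |p - q|_1 once the alphabet has two
   letters (so that mu_q <= 1/2; a single letter forces p = q).  Pinsker's
   inequality |x - y|_1 <= sqrt (2 ln 2 D(x||y)), applied to whichever of the two
   divergences is the minimum, bounds |p - r|_1 and |r - q|_1, and the triangle
   inequality |p - q|_1 <= |p - r|_1 + |r - q|_1 concludes. *)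

Lemma sumR_0 f : sumR 0 f = 0.
Proof. reflexivity. Qed.

Lemma sumR_S n f : sumR (S n) f = sumR n f + f n.
Proof.
  unfold sumR. rewrite seq_S, map_app, fold_right_app; simpl.
  induction (map f (seq 0 n)); simpl; lra.
Qed.

Lemma sumR_ext n f g : (forall i, (i < n)%nat -> f i = g i) -> sumR n f = sumR n g.
Proof.
  induction n as [|n IH]; intros H; [reflexivity|].
  rewrite !sumR_S, IH, H; [reflexivity | lia | intros; apply H; lia].
Qed.

Lemma sumR_le n f g : (forall i, (i < n)%nat -> f i <= g i) -> sumR n f <= sumR n g.
Proof.
  induction n as [|n IH]; intros H; [apply Rle_refl|].
  rewrite !sumR_S. apply Rplus_le_compat; [apply IH; intros|]; apply H; lia.
Qed.

Lemma sumR_add n f g : sumR n (fun i => f i + g i) = sumR n f + sumR n g.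
Proof. induction n as [|n IH]; [rewrite !sumR_0; ring|]. rewrite !sumR_S, IH. ring. Qed.

Lemma sumR_scal n c f : sumR n (fun i => c * f i) = c * sumR n f.
Proof. induction n as [|n IH]; [rewrite !sumR_0; ring|]. rewrite !sumR_S, IH. ring. Qed.

Lemma sumR_nonneg n f : (forall i, (i < n)%nat -> 0 <= f i) -> 0 <= sumR n f.
Proof.
  induction n as [|n IH]; intros H; [apply Rle_refl|].
  rewrite sumR_S. apply Rplus_le_le_0_compat; [apply IH; intros|]; apply H; lia.
Qed.

Lemma sumR_prefix k n f : (k <= n)%nat -> (forall i, (i < n)%nat -> 0 <= f i) ->
  sumR k f <= sumR n f.
Proof.
  intros Hk H. induction Hk as [|n Hk IH]; [apply Rle_refl|].
  rewrite sumR_S. assert (0 <= f n) by (apply H; lia).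
  assert (sumR k f <= sumR n f) by (apply IH; intros; apply H; lia). lra.
Qed.

Lemma sumR_term n f j : (forall i, (i < n)%nat -> 0 <= f i) -> (j < n)%nat ->
  f j <= sumR n f.
Proof.
  intros H Hj. apply Rle_trans with (sumR (S j) f); [|apply sumR_prefix; auto].
  rewrite sumR_S. assert (0 <= sumR j f) by (apply sumR_nonneg; intros; apply H; lia). lra.
Qed.

Lemma dist_le_1 n p i : is_dist n p -> (i < n)%nat -> p i <= 1.
Proof. intros [Hp Sp] Hi. rewrite <- Sp. apply sumR_term; auto. Qed.

Lemma fold_Rmin_le (q : nat -> R) c l i : In i l -> fold_right Rmin c (map q l) <= q i.
Proof.
  induction l as [|j l IH]; simpl; [tauto|].
  intros [<-|Hi]; [apply Rmin_l|]. eapply Rle_trans; [apply Rmin_r|auto].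
Qed.

Lemma fold_Rmin_pos (q : nat -> R) c l :
  0 < c -> (forall i, In i l -> 0 < q i) -> 0 < fold_right Rmin c (map q l).
Proof.
  intros Hc. induction l as [|j l IH]; simpl; intros H; [exact Hc|].
  apply Rmin_glb_lt; auto.
Qed.

Lemma mu_le n q i : (i < n)%nat -> mu n q <= q i.
Proof. intros Hi. apply fold_Rmin_le, in_seq. lia. Qed.

Lemma mu_pos n q : (1 <= n)%nat -> (forall i, (i < n)%nat -> 0 < q i) -> 0 < mu n q.
Proof.
  intros Hn H. apply fold_Rmin_pos; [apply H; lia|].
  intros i Hi. apply in_seq in Hi. apply H. lia.
Qed.

Lemma mu_le_half n q : (2 <= n)%nat -> is_dist n q -> mu n q <= 1/2.
Proof.
  intros Hn [Hq Sq].
  assert (mu n q <= q 0%nat) by (apply mu_le; lia).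
  assert (mu n q <= q 1%nat) by (apply mu_le; lia).
  assert (H2 : sumR 2 q <= sumR n q) by (apply sumR_prefix; auto).
  rewrite !sumR_S, sumR_0 in H2. lra.
Qed.

Lemma mu_le_1 n q : (1 <= n)%nat -> is_dist n q -> mu n q <= 1.
Proof.
  intros Hn Dq. apply Rle_trans with (q 0%nat); [apply mu_le | apply (dist_le_1 n)]; auto; lia.
Qed.

Lemma ln_le_sub_1 x : 0 < x -> ln x <= x - 1.
Proof. intros Hx. pose proof (exp_ineq1_le (ln x)). rewrite exp_ln in H by exact Hx. lra. Qed.

Lemma ln_ratio_le t q : 0 < t -> 0 < q -> ln t - ln q <= t / q - 1.
Proof. intros Ht Hq. rewrite <- ln_div by assumption. apply ln_le_sub_1, Rdiv_lt_0_compat; assumption. Qed.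

(* Convexity of [t |-> t ln (t/q)], which vanishes at [q] and equals [- ln q] at [1]. *)
Lemma xlnx_below_chord t q : 0 < q < 1 -> q <= t <= 1 ->
  t * (ln t - ln q) * (1 - q) <= (t - q) * (- ln q).
Proof.
  intros Hq Ht.
  assert (Lt : ln t <= t - 1) by (apply ln_le_sub_1; lra).
  assert (Ltq : ln t - ln q <= t / q - 1) by (apply ln_ratio_le; lra).
  assert (A1 : (t - q) * (1 - t) <= (t - q) * (- ln t)) by (apply Rmult_le_compat_l; lra).
  assert (A2 : (1 - t) * q * (1 - t / q) <= (1 - t) * q * (ln q - ln t)).
  { apply Rmult_le_compat_l; [apply Rmult_le_pos|]; lra. }
  replace ((1 - t) * q * (1 - t / q)) with ((1 - t) * (q - t)) in A2 by (field; lra).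
  nra.
Qed.

(* That is, [u |-> - ln u / (1 - u)] is nonincreasing on [(0, 1)]. *)
Lemma neg_ln_over_one_sub_antitone m q : 0 < m < 1 -> m <= q <= 1 ->
  (1 - m) * (- ln q) <= (1 - q) * (- ln m).
Proof.
  intros Hm Hq.
  assert (Lmq : ln m - ln q <= m / q - 1) by (apply ln_ratio_le; lra).
  assert (Lq : ln 1 - ln q <= 1 / q - 1) by (apply ln_ratio_le; lra).
  rewrite ln_1 in Lq.
  assert (A1 : (1 - q) * (1 - m / q) <= (1 - q) * (ln q - ln m)) by (apply Rmult_le_compat_l; lra).
  assert (A2 : (q - m) * (1 - 1 / q) <= (q - m) * ln q) by (apply Rmult_le_compat_l; lra).
  assert (E : (1 - q) * (1 - m / q) + (q - m) * (1 - 1 / q) = 0) by (field; lra).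
  nra.
Qed.

Definition kl_term (x y : R) : R := if Rlt_dec 0 x then x * ln (x / y) else 0.

Definition kl_nats n (x y : nat -> R) : R := sumR n (fun i => kl_term (x i) (y i)).

Definition L1 n (x y : nat -> R) : R := sumR n (fun i => Rabs (x i - y i)).

Lemma kl_term_nonpos t q : 0 <= t <= q -> 0 < q -> kl_term t q <= 0.
Proof.
  intros Ht Hq. unfold kl_term. destruct (Rlt_dec 0 t) as [Ht0|]; [|lra].
  rewrite ln_div by lra. assert (ln t <= ln q) by (apply ln_le; lra). nra.
Qed.

Lemma reverse_pinsker_term t q m : 0 <= t <= 1 -> m <= q <= 1 -> 0 < m <= 1/2 ->
  (1 - m) * kl_term t q <= ln (1 / m) * (m * (t - q) + (1 - m) * Rabs (t - q)).
Proof.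
  intros Ht Hq Hm.
  assert (Lm : ln (1 / m) = - ln m) by (unfold Rdiv; rewrite Rmult_1_l, ln_Rinv by lra; reflexivity).
  assert (Lm0 : 0 <= - ln m) by (pose proof (ln_le_sub_1 m); lra).
  rewrite Lm. destruct (Rle_dec q t) as [Hqt|Hqt].
  - rewrite Rabs_right by lra.
    unfold kl_term. destruct (Rlt_dec 0 t) as [_|]; [|lra]. rewrite ln_div by lra.
    destruct (Req_dec q 1) as [->|Hq1].
    + replace t with 1 by lra. rewrite ln_1. lra.
    + pose proof (xlnx_below_chord t q ltac:(lra) ltac:(lra)).
      pose proof (neg_ln_over_one_sub_antitone m q ltac:(lra) ltac:(lra)).
      apply Rmult_le_reg_r with (1 - q); [lra|]. nra.
  - rewrite Rabs_left by lra.
    pose proof (kl_term_nonpos t q ltac:(lra) ltac:(lra)).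
    assert (0 <= - ln m * ((q - t) * (1 - 2 * m))) by (apply Rmult_le_pos; nra).
    nra.
Qed.

Definition ln_minorant (u : R) : R := (u - 1) / u + 3 * (u - 1)^2 / (2 * u * (u + 2)).

Lemma is_derive_ln_sub_minorant u : 0 < u ->
  is_derive (fun v => ln v - ln_minorant v) u ((u - 1)^3 / (u^2 * (u + 2)^2)).
Proof.
  intros Hu. unfold ln_minorant. auto_derive.
  - repeat split; nra.
  - field. lra.
Qed.

(* The derivative of [ln - ln_minorant] has the sign of [u - 1], and the difference vanishes at [1]. *)
Lemma ln_minorant_le u : 0 < u -> ln_minorant u <= ln u.
Proof.
  intros Hu. set (h := fun v => ln v - ln_minorant v).
  assert (Hmin : 0 < Rmin 1 u) by (apply Rmin_glb_lt; lra).
  assert (Dh : forall c, Rmin 1 u <= c <= Rmax 1 u ->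
                 is_derive h c ((c - 1)^3 / (c^2 * (c + 2)^2))).
  { intros c Hc. apply is_derive_ln_sub_minorant. lra. }
  destruct (MVT_gen h 1 u (fun c => (c - 1)^3 / (c^2 * (c + 2)^2)))
    as [c [Hc Hmvt]].
  - intros c Hc. apply Dh. lra.
  - intros c Hc. apply continuity_pt_filterlim, (ex_derive_continuous h).
    eexists. apply Dh, Hc.
  - assert (Hh1 : h 1 = 0) by (unfold h, ln_minorant; rewrite ln_1; field).
    assert (Hden : 0 < c^2 * (c + 2)^2) by (apply Rmult_lt_0_compat; apply pow_lt; lra).
    assert (0 <= (c - 1)^3 * (u - 1)).
    { destruct (Rle_dec 1 u).
      - rewrite Rmin_left, Rmax_right in Hc by lra.
        apply Rmult_le_pos; [apply pow_le|]; lra.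
      - rewrite Rmin_right, Rmax_left in Hc by lra.
        replace ((c - 1)^3 * (u - 1)) with ((1 - c)^3 * (1 - u)) by ring.
        apply Rmult_le_pos; [apply pow_le|]; lra. }
    assert (0 <= (c - 1)^3 / (c^2 * (c + 2)^2) * (u - 1)).
    { replace ((c - 1)^3 / (c^2 * (c + 2)^2) * (u - 1))
        with ((c - 1)^3 * (u - 1) / (c^2 * (c + 2)^2)) by (field; lra).
      apply Rdiv_le_0_compat; lra. }
    unfold h in Hh1, Hmvt. lra.
Qed.

Lemma pinsker_term x y : 0 <= x -> 0 <= y -> (0 < x -> 0 < y) ->
  3 * (x - y)^2 / (2 * x + 4 * y) <= kl_term x y - x + y.
Proof.
  intros Hx Hy Hxy. unfold kl_term. destruct (Rlt_dec 0 x) as [Hx0|Hx0].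
  - specialize (Hxy Hx0).
    assert (x * ln_minorant (x / y) <= x * ln (x / y)).
    { apply Rmult_le_compat_l; [lra|]. apply ln_minorant_le, Rdiv_lt_0_compat; lra. }
    replace (x * ln_minorant (x / y)) with ((x - y) + 3 * (x - y)^2 / (2 * x + 4 * y))
      in H by (unfold ln_minorant; field; lra).
    lra.
  - replace x with 0 by lra. destruct (Req_dec y 0) as [->|Hy0].
    + replace (2 * 0 + 4 * 0) with 0 by ring. rewrite Rdiv_0_r. lra.
    + replace (3 * (0 - y)^2 / (2 * 0 + 4 * y)) with (3 / 4 * y) by (field; lra). lra.
Qed.

Lemma two_mul_abs_le w d lam : 0 <= w -> (w = 0 -> d = 0) ->
  2 * lam * Rabs d <= d^2 / w + lam^2 * w.
Proof.
  intros Hw Hd. destruct (Req_dec w 0) as [->|Hw0].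
  - rewrite Hd, Rabs_R0, Rdiv_0_r by reflexivity. lra.
  - apply Rmult_le_reg_r with w; [lra|].
    replace ((d^2 / w + lam^2 * w) * w) with (Rabs d ^ 2 + (lam * w)^2)
      by (rewrite pow2_abs; field; lra).
    pose proof (pow2_ge_0 (Rabs d - lam * w)). nra.
Qed.

Lemma KL_Some n x y e : (forall i, (i < n)%nat -> 0 <= y i) -> KL n x y = Some e ->
  (forall i, (i < n)%nat -> 0 < x i -> 0 < y i) /\ e = kl_nats n x y / ln 2.
Proof.
  intros Hy H. unfold KL in H.
  destruct (existsb _ (seq 0 n)) eqn:E; [discriminate|]. injection H as <-. split.
  - intros i Hi Hx. destruct (Req_dec (y i) 0) as [Hz|Hz]; [|specialize (Hy i Hi); lra].
    exfalso. assert (Hex : true = false); [|discriminate]. rewrite <- E. symmetry.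
    apply existsb_exists. exists i. split; [apply in_seq; lia|].
    destruct (Rlt_dec 0 (x i)); [|lra]. destruct (Req_EM_T (y i) 0); [reflexivity|lra].
  - unfold kl_nats, Rdiv at 2. rewrite Rmult_comm, <- sumR_scal. apply sumR_ext.
    intros i _. unfold kl_term, log2. destruct (Rlt_dec 0 (x i)); unfold Rdiv; ring.
Qed.

Lemma ln2_pos : 0 < ln 2.
Proof. rewrite <- ln_1. apply ln_increasing; lra. Qed.

Lemma L1_nonneg n x y : 0 <= L1 n x y.
Proof. apply sumR_nonneg. intros. apply Rabs_pos. Qed.

Lemma L1_sym n x y : L1 n x y = L1 n y x.
Proof. apply sumR_ext. intros. apply Rabs_minus_sym. Qed.

Lemma L1_triangle n x y z : L1 n x z <= L1 n x y + L1 n y z.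
Proof.
  unfold L1. rewrite <- sumR_add. apply sumR_le. intros.
  replace (x i - z i) with ((x i - y i) + (y i - z i)) by ring. apply Rabs_triang.
Qed.

(* Termwise [pinsker_term] gives [3 S <= kl_nats], and Cauchy-Schwarz with
   weights [2 x + 4 y] of total mass [6] gives [L1^2 <= 6 S]. *)
Lemma pinsker_nats n x y : is_dist n x -> is_dist n y ->
  (forall i, (i < n)%nat -> 0 < x i -> 0 < y i) ->
  L1 n x y ^ 2 <= 2 * kl_nats n x y.
Proof.
  intros [Hx Sx] [Hy Sy] Hxy.
  set (S := sumR n (fun i => (x i - y i)^2 / (2 * x i + 4 * y i))).
  assert (HS : 3 * S <= kl_nats n x y).
  { replace (kl_nats n x y) with (sumR n (fun i => kl_term (x i) (y i) + -1 * x i + y i)).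
    2: { rewrite !sumR_add, sumR_scal, Sx, Sy. unfold kl_nats. ring. }
    unfold S. rewrite <- sumR_scal. apply sumR_le. intros i Hi.
    pose proof (pinsker_term (x i) (y i) (Hx i Hi) (Hy i Hi) (Hxy i Hi)). unfold Rdiv in *. lra. }
  set (lam := L1 n x y / 6).
  assert (CS : 2 * lam * L1 n x y <= S + lam^2 * 6).
  { replace 6 with (sumR n (fun i => 2 * x i + 4 * y i))
      by (rewrite sumR_add, !sumR_scal, Sx, Sy; ring).
    unfold L1, S. rewrite <- !sumR_scal, <- sumR_add. apply sumR_le. intros i Hi.
    apply two_mul_abs_le; specialize (Hx i Hi); specialize (Hy i Hi); intros; nra. }
  unfold lam in CS. lra.
Qed.

Lemma pinsker n x y e : is_dist n x -> is_dist n y -> KL n x y = Some e ->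
  L1 n x y <= sqrt (2 * ln 2) * sqrt e.
Proof.
  intros Dx Dy H. destruct (KL_Some n x y e (proj1 Dy) H) as [Hxy ->].
  pose proof (pinsker_nats n x y Dx Dy Hxy). pose proof ln2_pos.
  rewrite <- sqrt_mult_alt by lra. rewrite <- (sqrt_pow2 (L1 n x y)) by apply L1_nonneg.
  apply sqrt_le_1_alt. replace (2 * ln 2 * (kl_nats n x y / ln 2)) with (2 * kl_nats n x y)
    by (field; lra). assumption.
Qed.

Lemma pinsker_min n x y a : is_dist n x -> is_dist n y ->
  ext_min (KL n x y) (KL n y x) = Some a -> L1 n x y <= sqrt (2 * ln 2) * sqrt a.
Proof.
  intros Dx Dy H.
  destruct (KL n x y) as [e1|] eqn:E1, (KL n y x) as [e2|] eqn:E2;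
    simpl in H; try discriminate; injection H as <-.
  - apply Rmin_case; [|rewrite L1_sym]; eapply pinsker; eauto.
  - eapply pinsker; eauto.
  - rewrite L1_sym. eapply pinsker; eauto.
Qed.

(* Summing [reverse_pinsker_term], the terms [m * (p i - q i)] cancel. *)
Lemma reverse_pinsker n p q d : (2 <= n)%nat -> is_dist n p -> is_dist n q ->
  (forall i, (i < n)%nat -> 0 < q i) -> KL n p q = Some d ->
  d <= log2 (1 / mu n q) * L1 n p q.
Proof.
  intros Hn Dp Dq Hq H. pose proof Dp as [Hp Sp]. pose proof Dq as [_ Sq].
  destruct (KL_Some n p q d (proj1 Dq) H) as [_ ->].
  set (m := mu n q).
  assert (Hm : 0 < m <= 1/2) by (split; [apply mu_pos; auto; lia | apply mu_le_half; auto]).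
  assert (A : (1 - m) * kl_nats n p q <=
              ln (1 / m) * (m * sumR n p + - m * sumR n q + (1 - m) * L1 n p q)).
  { unfold kl_nats, L1. rewrite <- !sumR_scal, <- !sumR_add, <- sumR_scal.
    apply sumR_le. intros i Hi.
    replace (m * p i + - m * q i + (1 - m) * Rabs (p i - q i))
      with (m * (p i - q i) + (1 - m) * Rabs (p i - q i)) by ring.
    apply reverse_pinsker_term; [split | split | ]; auto.
    - apply (dist_le_1 n); auto.
    - apply mu_le; auto.
    - apply (dist_le_1 n); auto. }
  rewrite Sp, Sq in A.
  replace (ln (1 / m) * (m * 1 + - m * 1 + (1 - m) * L1 n p q))
    with ((1 - m) * (ln (1 / m) * L1 n p q)) in A by ring.
  apply Rmult_le_reg_l in A; [|lra].
  pose proof ln2_pos.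
  replace (log2 (1 / m) * L1 n p q) with (ln (1 / m) * L1 n p q / ln 2)
    by (unfold log2; field; lra).
  apply Rmult_le_compat_r; [left; apply Rinv_0_lt_compat|]; assumption.
Qed.

Lemma KL_one_letter p q d : is_dist 1 p -> is_dist 1 q -> KL 1 p q = Some d -> d = 0.
Proof.
  intros [_ Sp] [Hq Sq] H. destruct (KL_Some 1 p q d Hq H) as [_ ->].
  unfold kl_nats, kl_term. rewrite sumR_S, sumR_0 in *.
  replace (p 0%nat) with 1 by lra. replace (q 0%nat) with 1 by lra.
  destruct (Rlt_dec 0 1); [|lra]. rewrite Rdiv_1_r, ln_1. field. apply Rgt_not_eq, ln2_pos.
Qed.

Lemma log2_inv_mu_nonneg n q : (1 <= n)%nat -> is_dist n q ->
  (forall i, (i < n)%nat -> 0 < q i) -> 0 <= log2 (1 / mu n q).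
Proof.
  intros Hn Dq Hq. pose proof (mu_pos n q Hn Hq). pose proof (mu_le_1 n q Hn Dq).
  unfold log2. apply Rdiv_le_0_compat; [|apply ln2_pos].
  rewrite <- ln_1. apply ln_le; [lra|]. apply Rle_div_r; lra.
Qed.

Theorem lemma16 (n : nat) (p q r : nat -> R) :
  (1 <= n)%nat ->
  is_dist n p -> is_dist n q -> is_dist n r ->
  (forall i, (i < n)%nat -> 0 < q i) ->
  forall d a b : R,
    KL n p q = Some d ->
    ext_min (KL n p r) (KL n r p) = Some a ->
    ext_min (KL n q r) (KL n r q) = Some b ->
    d <= log2 (1 / mu n q) * sqrt (2 * ln 2) * (sqrt a + sqrt b).
Proof.
  intros Hn Dp Dq Dr Hq d a b Hd Ha Hb.
  pose proof (log2_inv_mu_nonneg n q Hn Dq Hq) as Hlog.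
  assert (Hpq : L1 n p q <= sqrt (2 * ln 2) * (sqrt a + sqrt b)).
  { pose proof (pinsker_min n p r a Dp Dr Ha).
    pose proof (pinsker_min n q r b Dq Dr Hb). rewrite L1_sym in H0.
    pose proof (L1_triangle n p r q). lra. }
  rewrite Rmult_assoc.
  destruct (Nat.eq_dec n 1) as [->|Hn1].
  - rewrite (KL_one_letter p q d Dp Dq Hd).
    apply Rmult_le_pos; [assumption|]. pose proof (L1_nonneg 1 p q). lra.
  - apply Rle_trans with (log2 (1 / mu n q) * L1 n p q).
    + apply reverse_pinsker; auto. lia.
    + apply Rmult_le_compat_l; assumption.
Qed.
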